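(* Let $V$ be an $n$-dimensional vector space over $\mathbb R$ or $\mathbb C$ and let $K_1,\dots,K_n\in\mathrm{gl}(V)$ be pairwise commuting operators such that there exists $\xi\in V$ with $K_1\xi,\dots,K_n\xi$ linearly independent. Then $\mathfrak A=\operatorname{Span}(K_1,\dots,K_n)$ coincides with its centraliser $\mathcal C(\mathfrak A)=\{B\in\mathrm{gl}(V)\mid BA=AB\ \text{for all } A\in\mathfrak A\}$; consequently $\mathfrak A$ is a unital commutative associative subalgebra of $\mathrm{gl}(V)$. *)

From HB Require Import structures.
From mathcomp Require Import all_boot all_order all_algebra.
Set Implicit Arguments. Unset Strict Implicit. Unset Printing Implicit Defensive.
Import GRing.Theory.
Local Open Scope ring_scope.

(* V = F^n (column vectors 'cV[F]_n), gl(V) = 'M[F]_n, operators act by A *m v. *)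

Definition in_span (F : fieldType) (n : nat) (K : 'I_n -> 'M[F]_n) (B : 'M[F]_n) : Prop :=
  exists c : 'I_n -> F, B = \sum_(i < n) c i *: K i.

Definition in_centraliser (F : fieldType) (n : nat) (S : 'M[F]_n -> Prop) (B : 'M[F]_n) : Prop :=
  forall A, S A -> B *m A = A *m B.

Definition lin_indep (F : fieldType) (n : nat) (v : 'I_n -> 'cV[F]_n) : Prop :=
  forall c : 'I_n -> F, \sum_(i < n) c i *: v i = 0 -> forall i, c i = 0.

From mathcomp Require Import all_boot all_order all_algebra.
Set Implicit Arguments. Unset Strict Implicit. Unset Printing Implicit Defensive.
Import GRing.Theory.
Local Open Scope ring_scope.

(* Every element of the centraliser of the K_i is a combination of the K_i:
   if B commutes with the K_i, write B xi = sum c_i K_i xi in the basis (K_i xi)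
   and set D := B - sum c_i K_i.  Then D commutes with the K_i and kills xi,
   hence kills every K_i xi, i.e. a basis, so D = 0.  Conversely the span of a
   commuting family is commutative, hence contained in its centraliser; closure
   under products and the identity then follow from the centraliser side. *)

Lemma lin_indep_spanning (F : fieldType) (n : nat) (v : 'I_n -> 'cV[F]_n) :
  lin_indep v -> forall w : 'cV[F]_n, exists d : 'I_n -> F, w = \sum_(i < n) d i *: v i.
Proof.
move=> indep_v w.
(* the matrix with rows v_i^T has trivial kernel, hence is invertible *)
pose M : 'M[F]_n := \matrix_i (v i)^T.
have mulM (u : 'rV[F]_n) : u *m M = (\sum_(i < n) u 0 i *: v i)^T.
  rewrite mulmx_sum_row linear_sum; apply: eq_bigr => i _.
  by rewrite linearZ rowK.
have : row_free M.
  rewrite -kermx_eq0; apply/eqP/row_matrixP => i; rewrite row0.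
  have := row_sub i (kermx M); rewrite sub_kermx => /eqP.
  rewrite mulM => /(congr1 trmx); rewrite trmxK linear0 => /indep_v row_i0.
  by apply/matrixP => a j; rewrite (ord1 a) row_i0 mxE.
rewrite row_free_unit => unit_M.
by exists (fun i => (w^T *m invmx M) 0 i); apply: trmx_inj; rewrite -mulM mulmxKV.
Qed.

Lemma mx_eq0_if_annihilates (R : pzSemiRingType) (m n : nat) (D : 'M[R]_(m, n)) :
  (forall v : 'cV[R]_n, D *m v = 0) -> D = 0.
Proof.
move=> kill_D; apply/matrixP => i j.
have /matrixP/(_ i 0) := kill_D (delta_mx j 0).
by rewrite -colE !mxE.
Qed.

Section CommutingFamily.

Variables (F : fieldType) (n : nat) (K : 'I_n -> 'M[F]_n).

Lemma in_span_K j : in_span K (K j).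
Proof.
exists (fun i => (i == j)%:R); rewrite (bigD1 j) //= eqxx scale1r big1 ?addr0 //.
by move=> i /negbTE ->; rewrite scale0r.
Qed.

Lemma commute_in_span (X A : 'M[F]_n) :
  (forall j, X *m K j = K j *m X) -> in_span K A -> X *m A = A *m X.
Proof.
move=> XK [c ->]; rewrite mulmx_sumr mulmx_suml; apply: eq_bigr => j _.
by rewrite -scalemxAr -scalemxAl XK.
Qed.

Hypothesis K_comm : forall i j, K i *m K j = K j *m K i.

Lemma in_span_centraliser B : in_span K B -> in_centraliser (in_span K) B.
Proof.
move=> span_B A span_A; apply: commute_in_span span_A => j.
by symmetry; apply: commute_in_span span_B => i.
Qed.

Variable xi : 'cV[F]_n.
Hypothesis indep_Kxi : lin_indep (fun i => K i *m xi).

Lemma commute_K_annihilates_eq0 (D : 'M[F]_n) :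
  (forall j, D *m K j = K j *m D) -> D *m xi = 0 -> D = 0.
Proof.
move=> DK Dxi; apply: mx_eq0_if_annihilates => v.
have [d ->] := lin_indep_spanning indep_Kxi v.
rewrite mulmx_sumr big1 // => i _.
by rewrite -scalemxAr mulmxA DK -mulmxA Dxi mulmx0 scaler0.
Qed.

Lemma centraliser_in_span B : in_centraliser (in_span K) B -> in_span K B.
Proof.
move=> centr_B; have BK j : B *m K j = K j *m B := centr_B _ (in_span_K j).
have [c Bxi] := lin_indep_spanning indep_Kxi (B *m xi).
exists c; set A := \sum_(i < n) c i *: K i.
have span_A : in_span K A by exists c.
apply/eqP; rewrite -subr_eq0; apply/eqP/commute_K_annihilates_eq0.
  by move=> j; rewrite mulmxBl mulmxBr BK (in_span_centraliser span_A (in_span_K j)).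
rewrite mulmxBl Bxi mulmx_suml; apply/eqP; rewrite subr_eq0; apply/eqP.
by apply: eq_bigr => i _; rewrite scalemxAl.
Qed.

End CommutingFamily.

Theorem lemma2p1 (F : fieldType) (n : nat) (K : 'I_n -> 'M[F]_n)
  (hcomm : forall i j, K i *m K j = K j *m K i)
  (hxi : exists xi : 'cV[F]_n, lin_indep (fun i => K i *m xi)) :
  (forall B : 'M[F]_n, in_span K B <-> in_centraliser (in_span K) B)
  /\ (in_span K 1%:M
      /\ (forall A B, in_span K A -> in_span K B -> in_span K (A *m B))
      /\ (forall A B, in_span K A -> in_span K B -> A *m B = B *m A)).
Proof.
have [xi indep_Kxi] := hxi.
have centr_span := centraliser_in_span hcomm indep_Kxi.
have span_centr := in_span_centraliser hcomm.
split; first by move=> B; split; [apply: span_centr | apply: centr_span].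
split; first by apply: centr_span => A _; rewrite mul1mx mulmx1.
split; last by move=> A B span_A span_B; apply: span_centr.
move=> A B span_A span_B; apply: centr_span => C span_C.
by rewrite -mulmxA (span_centr _ span_B _ span_C) !mulmxA (span_centr _ span_A _ span_C).
Qed.
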